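(* Let $n\ge1$ and let $I=(e_1,\dots,e_n)$ be the identity matrix (standard basis). Let $W\subset\mathcal{S}^2(\mathbb{R}^n)^n$ be the subspace of $(q_1,\dots,q_n)$ such that for all $i,j=1,\dots,n$: $q_j(e_j,e_j)=0$, $\langle e_i,q_j(e_i,e_i)\rangle+\langle e_j,q_i(e_j,e_j)\rangle=0$, and $\langle e_1,q_1(e_j,e_j)\rangle=0$. If $\ker L^\Psi_I\cap W=\{0\}$, then $\ker L^\Psi_I=\operatorname{Im}L^\Phi_I$.
   Context: $\mathcal{S}^r(\mathbb{R}^n)$ denotes symmetric $r$-linear maps $(\mathbb{R}^n)^r\to\mathbb{R}^n$; $\langle\cdot,\cdot\rangle$ is the Euclidean inner product. For $v\in\mathbb{R}^n$, $Q_v(\xi,\eta)=\langle\xi,\eta\rangle v-\langle\xi,v\rangle\eta-\langle\eta,v\rangle\xi$. For $Q\in\mathcal{S}^2(\mathbb{R}^n)$ and matrices $A,C$: $Q\circ(A,C)(\xi,\eta)=Q(A\xi,C\eta)$, $A\circ Q(\xi,\eta)=A(Q(\xi,\eta))$. For $Q,Q'\in\mathcal{S}^2(\mathbb{R}^n)$, $[Q,Q'](\xi,\eta,\theta)=\{Q(\xi,Q'(\eta,\theta))+Q(\eta,Q'(\theta,\xi))+Q(\theta,Q'(\xi,\eta))\}-\{Q'(\xi,Q(\eta,\theta))+Q'(\eta,Q(\theta,\xi))+Q'(\theta,Q(\xi,\eta))\}$. For $B=(v_1,\dots,v_n)\in\mathrm{GL}_n(\mathbb{R})$, $L^\Phi_B:M_n(\mathbb{R})^2\to\mathcal{S}^2(\mathbb{R}^n)^n$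 is $L^\Phi_B(A',B'')=(A'\circ Q_{v_i}-Q_{v_i}\circ(A',I)-Q_{v_i}\circ(I,A')+Q_{\omega_i})_{1\le i\le n}$ where $B''=(\omega_1,\dots,\omega_n)$, and $L^\Psi_B(q_1,\dots,q_n)=([q_i,Q_{v_j}]-[q_j,Q_{v_i}])_{1\le i<j\le n}\in\mathcal{S}^3(\mathbb{R}^n)^{n(n-1)/2}$. Here $B=I$, so $v_i=e_i$. *)

From mathcomp Require Import all_boot all_order all_algebra.
From mathcomp Require Import reals.
Set Implicit Arguments. Unset Strict Implicit. Unset Printing Implicit Defensive.
Import Order.TTheory GRing.Theory Num.Theory.
Local Open Scope ring_scope.

Section Defs.
Variables (R : realType) (n : nat).

Definition vec := 'cV[R]_n.

Definition dotv (u v : vec) : R := \sum_(k < n) u k 0 * v k 0.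

(* candidate elements of S^2(R^n): maps (R^n)^2 -> R^n *)
Definition map2 := vec -> vec -> vec.

Definition is_S2 (Q : map2) : Prop :=
  (forall x y, Q x y = Q y x) /\
  (forall (a : R) x y z, Q (a *: x + y) z = a *: Q x z + Q y z).

Definition Qv (v : vec) : map2 := fun xi eta =>
  dotv xi eta *: v - dotv xi v *: eta - dotv eta v *: xi.

Definition brk (Q Q' : map2) (xi eta th : vec) : vec :=
  (Q xi (Q' eta th) + Q eta (Q' th xi) + Q th (Q' xi eta))
  - (Q' xi (Q eta th) + Q' eta (Q th xi) + Q' th (Q xi eta)).

(* L^Phi_B(A',B'') : the i-th component, v_i = col i B, omega_i = col i B'' *)
Definition LPhi (B A' B'' : 'M[R]_n) (i : 'I_n) : map2 := fun xi eta =>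
  A' *m Qv (col i B) xi eta - Qv (col i B) (A' *m xi) eta
  - Qv (col i B) xi (A' *m eta) + Qv (col i B'') xi eta.

Definition in_ker_LPsi (B : 'M[R]_n) (q : 'I_n -> map2) : Prop :=
  forall i j : 'I_n, (i < j)%N -> forall xi eta th : vec,
    brk (q i) (Qv (col j B)) xi eta th - brk (q j) (Qv (col i B)) xi eta th = 0.

Definition in_im_LPhi (B : 'M[R]_n) (q : 'I_n -> map2) : Prop :=
  exists A' B'' : 'M[R]_n, forall (i : 'I_n) (xi eta : vec),
    q i xi eta = LPhi B A' B'' i xi eta.

Definition ev (i : 'I_n) : vec := col i 1%:M.

End Defs.

(* the subspace W (dimension n.+1 >= 1, so that e_1 = ev ord0 exists) *)
Definition in_W (R : realType) (n : nat) (q : 'I_n.+1 -> map2 R n.+1) : Prop :=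
  forall i j : 'I_n.+1,
    q j (ev R j) (ev R j) = 0 /\
    dotv (ev R i) (q j (ev R i) (ev R i)) + dotv (ev R j) (q i (ev R j) (ev R j)) = 0 /\
    dotv (ev R ord0) (q ord0 (ev R j) (ev R j)) = 0.

(** The image of [LPhi] lies in the kernel of [LPsi]: the bracket of two maps
    [Qv v], [Qv w] vanishes identically, and the bracket obeys a Leibniz rule
    for the action [mx_act A] of a matrix on bilinear maps, which carries
    [[Qv v_i, Qv v_j] = 0] to [[mx_act A (Qv v_i), Qv v_j] = [mx_act A (Qv v_j), Qv v_i]].
    Conversely, for [q] in the kernel the linear conditions defining [W] can be
    solved for [A] and [B''] so that [q - LPhi A B''] lies in [W]; it is still
    in the kernel, hence vanishes by hypothesis. *)
From mathcomp Require Import all_boot all_order all_algebra.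
From mathcomp Require Import reals.
From mathcomp Require Import ring lra.
Import Order.TTheory GRing.Theory Num.Theory.
Local Open Scope ring_scope.
Set Implicit Arguments. Unset Strict Implicit. Unset Printing Implicit Defensive.

Section Brackets.
Variables (R : realType) (n : nat).
Implicit Types (x y z u v w : 'cV[R]_n) (A B : 'M[R]_n) (Q : map2 R n)
  (q : 'I_n -> map2 R n).

Lemma dotvC x y : dotv x y = dotv y x.
Proof. by apply: eq_bigr => k _; rewrite mulrC. Qed.

Lemma dotvDl x y z : dotv (x + y) z = dotv x z + dotv y z.
Proof. by rewrite /dotv -big_split; apply: eq_bigr => k _; rewrite !mxE mulrDl. Qed.

Lemma dotvZl (a : R) x z : dotv (a *: x) z = a * dotv x z.
Proof. by rewrite /dotv mulr_sumr; apply: eq_bigr => k _; rewrite !mxE mulrA. Qed.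

Lemma dotvNl x z : dotv (- x) z = - dotv x z.
Proof. by rewrite -scaleN1r dotvZl mulN1r. Qed.

Lemma dotvBl x y z : dotv (x - y) z = dotv x z - dotv y z.
Proof. by rewrite dotvDl dotvNl. Qed.

Lemma dotvDr x y z : dotv z (x + y) = dotv z x + dotv z y.
Proof. by rewrite !(dotvC z) dotvDl. Qed.

Lemma dotvZr (a : R) x z : dotv z (a *: x) = a * dotv z x.
Proof. by rewrite !(dotvC z) dotvZl. Qed.

Lemma dotvNr x z : dotv z (- x) = - dotv z x.
Proof. by rewrite !(dotvC z) dotvNl. Qed.

Lemma dotvBr x y z : dotv z (x - y) = dotv z x - dotv z y.
Proof. by rewrite !(dotvC z) dotvBl. Qed.

Definition additive2 Q :=
  (forall x y z, Q x (y + z) = Q x y + Q x z) /\ (forall x y, Q x (- y) = - Q x y).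

Lemma Qv_additive2 v : additive2 (Qv v).
Proof.
by split=> *; rewrite /Qv !(dotvDl, dotvDr, dotvNl, dotvNr);
  apply/matrixP => k l; rewrite !mxE; ring.
Qed.

Lemma QvC v x y : Qv v x y = Qv v y x.
Proof. by rewrite /Qv (dotvC x y); apply/matrixP => k l; rewrite !mxE; ring. Qed.

Lemma brk_Qv v w x y z : brk (Qv v) (Qv w) x y z = 0.
Proof.
rewrite /brk /Qv !(dotvDl, dotvDr, dotvBl, dotvBr, dotvZl, dotvZr, dotvNl, dotvNr).
(* put every inner product in one orientation so that [ring] sees the cancellations *)
rewrite ?[dotv w v]dotvC ?[dotv x v]dotvC ?[dotv y v]dotvC ?[dotv z v]dotvC.
rewrite ?[dotv x w]dotvC ?[dotv y w]dotvC ?[dotv z w]dotvC.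
rewrite ?[dotv y x]dotvC ?[dotv z x]dotvC ?[dotv z y]dotvC.
by apply/matrixP => k l; rewrite !mxE; ring.
Qed.

Lemma brk_ext Q1 Q2 : (forall a b, Q1 a b = Q2 a b) ->
  forall Q' x y z, brk Q1 Q' x y z = brk Q2 Q' x y z.
Proof. by move=> eqQ Q' x y z; rewrite /brk !eqQ. Qed.

Lemma brkC Q Q' x y z : brk Q Q' x y z = - brk Q' Q x y z.
Proof. by rewrite /brk opprB. Qed.

Lemma brkDl Q1 Q2 Q' x y z : additive2 Q' ->
  brk (fun a b => Q1 a b + Q2 a b) Q' x y z = brk Q1 Q' x y z + brk Q2 Q' x y z.
Proof.
by move=> [Q'D _]; rewrite /brk !Q'D; apply/matrixP => k l; rewrite !mxE; ring.
Qed.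

Lemma brkBl Q1 Q2 Q' x y z : additive2 Q' ->
  brk (fun a b => Q1 a b - Q2 a b) Q' x y z = brk Q1 Q' x y z - brk Q2 Q' x y z.
Proof.
by move=> [Q'D Q'N]; rewrite /brk !Q'D !Q'N; apply/matrixP => k l; rewrite !mxE; ring.
Qed.

Definition mx_act A Q : map2 R n := fun x y => A *m Q x y - Q (A *m x) y - Q x (A *m y).

Lemma brk_mx_act A Q Q' x y z : additive2 Q -> additive2 Q' ->
  brk (mx_act A Q) Q' x y z + brk Q (mx_act A Q') x y z =
  mx_act A (fun a b => brk Q Q' a b z) x y - brk Q Q' x y (A *m z).
Proof.
move=> [QD QN] [Q'D Q'N].
rewrite /brk /mx_act !(QD, QN, Q'D, Q'N) !(mulmxDr, mulmxN).
by apply/matrixP => k l; rewrite !mxE; ring.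
Qed.

Lemma LPhiE B A B'' i x y :
  LPhi B A B'' i x y = mx_act A (Qv (col i B)) x y + Qv (col i B'') x y.
Proof. by []. Qed.

Lemma LPhi_S2 B A B'' i : is_S2 (LPhi B A B'' i).
Proof.
split=> [x y | a x y z].
  rewrite /LPhi !(QvC _ x y) (QvC _ (A *m x)) (QvC _ x (A *m y)).
  by rewrite -!addrA (addrCA (- _)).
rewrite /LPhi /Qv !mulmxDr !mulmxN -!scalemxAr.
rewrite !(dotvDl, dotvDr, dotvBl, dotvBr, dotvZl, dotvZr, dotvNl, dotvNr).
rewrite ?mulmxDr ?mulmxN -?scalemxAr.
by apply/matrixP => k l; rewrite !mxE; ring.
Qed.

Lemma is_S2B Q1 Q2 : is_S2 Q1 -> is_S2 Q2 -> is_S2 (fun x y => Q1 x y - Q2 x y).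
Proof.
move=> [C1 L1] [C2 L2]; split=> *; first by rewrite C1 C2.
by rewrite L1 L2 scalerBr opprD addrACA.
Qed.

Lemma LPhi_in_ker B A B'' : in_ker_LPsi B (LPhi B A B'').
Proof.
move=> i j _ x y z.
have brk_LPhi k l : brk (LPhi B A B'' k) (Qv (col l B)) x y z =
    brk (mx_act A (Qv (col k B))) (Qv (col l B)) x y z.
  by rewrite (brk_ext (LPhiE B A B'' k)) brkDl ?brk_Qv ?addr0 //; apply: Qv_additive2.
rewrite !brk_LPhi (brkC (mx_act A (Qv (col j B)))) opprK.
rewrite brk_mx_act; try exact: Qv_additive2.
by rewrite /mx_act !brk_Qv mulmx0 !subr0.
Qed.

Lemma in_im_LPhi_ker B q : in_im_LPhi B q -> in_ker_LPsi B q.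
Proof.
move=> [A [B'' eqq]] i j ij x y z.
by rewrite !(brk_ext (eqq _)); apply: LPhi_in_ker.
Qed.

Lemma in_ker_LPsiB B q1 q2 : in_ker_LPsi B q1 -> in_ker_LPsi B q2 ->
  in_ker_LPsi B (fun i x y => q1 i x y - q2 i x y).
Proof.
move=> ker1 ker2 i j ij x y z.
rewrite !brkBl; try exact: Qv_additive2.
move/subr0_eq: (ker1 i j ij x y z) => ->; move/subr0_eq: (ker2 i j ij x y z) => ->.
exact: subrr.
Qed.

Lemma dotv_evl a x : dotv (ev R a) x = x a 0.
Proof.
rewrite /dotv (bigD1 a) //= big1 => [|k ne]; first by rewrite !mxE eqxx mul1r addr0.
by rewrite !mxE (negbTE ne) mul0r.
Qed.

Lemma dotv_evr a x : dotv x (ev R a) = x a 0.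
Proof. by rewrite dotvC dotv_evl. Qed.

Lemma sum_mul_ev A k m : \sum_j A m j * ev R k j 0 = A m k.
Proof.
rewrite (bigD1 k) //= big1 => [|j ne]; first by rewrite !mxE eqxx mulr1 addr0.
by rewrite !mxE (negbTE ne) mulr0.
Qed.

Lemma colv_entryB u v m : (u - v) m 0 = u m 0 - v m 0.
Proof. by rewrite !mxE. Qed.

Lemma LPhi_ev A B'' i k m :
  LPhi 1%:M A B'' i (ev R k) (ev R k) m 0 =
  A m i - 2 * A k k * (m == i)%:R + 2 * A i k * (m == k)%:R
  + B'' m i - 2 * B'' k i * (m == k)%:R.
Proof.
rewrite /LPhi /Qv -/(ev R i) !mulmxDr !mulmxN -!scalemxAr.
by rewrite !(dotv_evl, dotv_evr) !mxE !sum_mul_ev eqxx /=; ring.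
Qed.

End Brackets.

Section Normalization.
Variables (R : realType) (n : nat) (q : 'I_n.+1 -> map2 R n.+1).

Let qc (k j m : 'I_n.+1) : R := q j (ev R k) (ev R k) m 0.

(* [B] is forced by the first condition of [W], the off-diagonal part of [A] by
   the second, and the diagonal of [A] by the third, which leaves [A_00] free. *)
Definition W_normalizer_mxA : 'M[R]_n.+1 := \matrix_(m, j)
  if m == j then (if j == ord0 then 0 else - (qc ord0 ord0 ord0 + qc j ord0 ord0) / 2)
  else (qc m j m + qc j m j + qc j j m + qc m m j) / 8.

Definition W_normalizer_mxB : 'M[R]_n.+1 := \matrix_(m, j)
  if m == j then W_normalizer_mxA j j - qc j j j else qc j j m - W_normalizer_mxA m j.

Lemma sub_LPhi_W_normalizer_in_W :
  in_W (fun i x y => q i x y - LPhi 1%:M W_normalizer_mxA W_normalizer_mxB i x y).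
Proof.
move=> i j; rewrite !dotv_evl; split; [|split].
- apply/matrixP => m l; rewrite (ord1 l) colv_entryB LPhi_ev !mxE /qc.
  by have [->|_] := eqVneq m j; rewrite ?eqxx /=; lra.
- rewrite !colv_entryB !LPhi_ev !mxE /qc.
  by have [->|_] := eqVneq i j; rewrite ?eqxx /=; lra.
- rewrite colv_entryB LPhi_ev !mxE /qc.
  by have [->|_] := eqVneq j ord0; rewrite ?eqxx /=; lra.
Qed.

End Normalization.

Theorem lemma2p13 (R : realType) (n : nat) :
  (forall q : 'I_n.+1 -> map2 R n.+1,
     (forall i, is_S2 (q i)) -> in_ker_LPsi 1%:M q -> in_W q ->
     forall i xi eta, q i xi eta = 0) ->
  forall q : 'I_n.+1 -> map2 R n.+1,
    (forall i, is_S2 (q i)) ->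
    (in_ker_LPsi 1%:M q <-> in_im_LPhi 1%:M q).
Proof.
move=> ker_W_trivial q q_S2; split; last exact: in_im_LPhi_ker.
move=> q_ker; set A := W_normalizer_mxA q; set B := W_normalizer_mxB q.
exists A, B => i x y; apply/eqP; rewrite -subr_eq0; apply/eqP.
apply: ker_W_trivial (sub_LPhi_W_normalizer_in_W q) i x y.
- by move=> k; apply: is_S2B; [apply: q_S2 | apply: LPhi_S2].
- by apply: in_ker_LPsiB => //; apply: LPhi_in_ker.
Qed.
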